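(* Every group containing the free group $F_2$ has weak paradoxical towers.
   Context: For $n\in\mathbb N$, a group $G$ has weak $n$-paradoxical towers if for every $m\in\mathbb N$ there exist a finite subset $D\subseteq G$ with $|D|\ge m$, subsets $K_1,\dots,K_n\subseteq G$ and elements $g_1,\dots,g_n\in G$ such that for each $j$ the sets $\{dK_j\}_{d\in D}$ are pairwise disjoint, and $\bigcup_{j=1}^n g_jK_j=G$. $G$ has weak paradoxical towers if it has weak $n$-paradoxical towers for some $n$. *)

From Stdlib Require Import List Arith.
Import ListNotations.

Section Defs.
Context {G : Type} (mul : G -> G -> G) (one : G) (inv : G -> G).

Record is_group : Prop := {
  grp_assoc : forall x y z, mul x (mul y z) = mul (mul x y) z;
  grp_id_l  : forall x, mul one x = x;
  grp_id_r  : forall x, mul x one = x;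
  grp_inv_l : forall x, mul (inv x) x = one;
  grp_inv_r : forall x, mul x (inv x) = one }.

Definition ltrans (d : G) (K : G -> Prop) (x : G) : Prop :=
  exists k, K k /\ x = mul d k.

(* Words over {a, b, a^-1, b^-1}: a letter is (generator, inverted?),
   generator false = a, true = b. *)
Definition letter := (bool * bool)%type.

Definition eval_letter (a b : G) (l : letter) : G :=
  let base := if fst l then b else a in
  if snd l then inv base else base.

Definition eval_word (a b : G) (w : list letter) : G :=
  fold_right (fun l acc => mul (eval_letter a b l) acc) one w.

Fixpoint reduced (w : list letter) : Prop :=
  match w with
  | l1 :: ((l2 :: _) as t) => ~ (fst l1 = fst l2 /\ snd l1 <> snd l2) /\ reduced t
  | _ => True
  end.

Definition free_pair (a b : G) : Prop :=
  forall w, w <> [] -> reduced w -> eval_word a b w <> one.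

Definition contains_F2 : Prop := exists a b, free_pair a b.

Definition weak_n_paradoxical_towers (n : nat) : Prop :=
  forall m : nat, exists (D : list G) (K : nat -> G -> Prop) (g : nat -> G),
    NoDup D /\ m <= length D /\
    (forall j, j < n -> forall d d', In d D -> In d' D -> d <> d' ->
       forall x, ltrans d (K j) x -> ltrans d' (K j) x -> False) /\
    (forall x, exists j, j < n /\ ltrans (g j) (K j) x).

Definition weak_paradoxical_towers : Prop :=
  exists n, weak_n_paradoxical_towers n.
End Defs.

(* Let H be the subgroup generated by a free pair a, b.  Inside H take
   D = {b^i | i < m}, K_0 = the reduced words starting with a and K_1 = the
   reduced words starting with a^-1.  Then H = K_0 ∪ a K_1, and the translates
   b^i K_j are pairwise disjoint: b^k w' with k > 0 and w' starting with a^{±1}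
   is again reduced, so it cannot equal another such word w.  Towers of a
   subgroup H lift to G by multiplying on the right by a transversal of the
   right cosets H x. *)

From Stdlib Require Import List Arith Lia.
From Stdlib Require Import ClassicalEpsilon FunctionalExtensionality PropExtensionality.
Import ListNotations.

Section GroupFacts.
Variables (G : Type) (mul : G -> G -> G) (one : G) (inv : G -> G).
Hypothesis HG : is_group mul one inv.

Lemma mulgA x y z : mul x (mul y z) = mul (mul x y) z.
Proof. exact (grp_assoc _ _ _ HG x y z). Qed.
Lemma mul1g x : mul one x = x.
Proof. exact (grp_id_l _ _ _ HG x). Qed.
Lemma mulg1 x : mul x one = x.
Proof. exact (grp_id_r _ _ _ HG x). Qed.
Lemma mulVg x : mul (inv x) x = one.
Proof. exact (grp_inv_l _ _ _ HG x). Qed.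
Lemma mulgV x : mul x (inv x) = one.
Proof. exact (grp_inv_r _ _ _ HG x). Qed.

Lemma mulgI x y z : mul x y = mul x z -> y = z.
Proof.
  intro E. rewrite <- (mul1g y), <- (mul1g z), <- (mulVg x), <- !mulgA, E.
  reflexivity.
Qed.

Lemma invMg x y : inv (mul x y) = mul (inv y) (inv x).
Proof.
  apply (mulgI (mul x y)).
  rewrite mulgV, mulgA, <- (mulgA x y), mulgV, mulg1, mulgV. reflexivity.
Qed.

Lemma invg1 : inv one = one.
Proof. rewrite <- (mul1g (inv one)). apply mulgV. Qed.

Lemma invgK x : inv (inv x) = x.
Proof. apply (mulgI (inv x)). rewrite mulgV, mulVg. reflexivity. Qed.

End GroupFacts.

Arguments mulgA {G mul one inv} HG x y z.
Arguments mul1g {G mul one inv} HG x.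
Arguments mulg1 {G mul one inv} HG x.
Arguments mulVg {G mul one inv} HG x.
Arguments mulgV {G mul one inv} HG x.
Arguments mulgI {G mul one inv} HG x y z.
Arguments invMg {G mul one inv} HG x y.
Arguments invg1 {G mul one inv} HG.
Arguments invgK {G mul one inv} HG x.

Section SubgroupTowers.
Variables (G : Type) (mul : G -> G -> G) (one : G) (inv : G -> G).
Hypothesis HG : is_group mul one inv.

Definition weak_n_paradoxical_towers_in (H : G -> Prop) (n : nat) : Prop :=
  forall m : nat, exists (D : list G) (K : nat -> G -> Prop) (g : nat -> G),
    NoDup D /\ m <= length D /\
    (forall d, In d D -> H d) /\
    (forall j k, K j k -> H k) /\
    (forall j, j < n -> forall d d', In d D -> In d' D -> d <> d' ->
       forall x, ltrans mul d (K j) x -> ltrans mul d' (K j) x -> False) /\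
    (forall x, H x -> exists j, j < n /\ ltrans mul (g j) (K j) x).

Variable H : G -> Prop.
Hypotheses (H_one : H one)
  (H_mul : forall x y, H x -> H y -> H (mul x y))
  (H_inv : forall x, H x -> H (inv x)).

Definition coset_rep (x : G) : G :=
  epsilon (inhabits one) (fun y => exists h, H h /\ x = mul h y).

Lemma coset_rep_spec x : exists h, H h /\ x = mul h (coset_rep x).
Proof.
  apply (epsilon_spec (inhabits one) (fun y => exists h, H h /\ x = mul h y)).
  exists x, one. split; [exact H_one | symmetry; apply (mul1g HG)].
Qed.

Lemma coset_rep_mul h x : H h -> coset_rep (mul h x) = coset_rep x.
Proof.
  intro Hh. unfold coset_rep. f_equal.
  apply functional_extensionality; intro y.
  apply propositional_extensionality. split; intros [h' [Hh' E]].
  - exists (mul (inv h) h'). split; [auto|].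
    rewrite <- (mulgA HG), <- E, (mulgA HG), (mulVg HG), (mul1g HG). reflexivity.
  - exists (mul h h'). split; [auto|]. rewrite E, (mulgA HG). reflexivity.
Qed.

Lemma coset_rep_idem x : coset_rep (coset_rep x) = coset_rep x.
Proof.
  destruct (coset_rep_spec x) as [h [Hh E]].
  rewrite <- (coset_rep_mul h (coset_rep x) Hh), <- E. reflexivity.
Qed.

Definition coset_lift (K : G -> Prop) (y : G) : Prop :=
  exists k, K k /\ y = mul k (coset_rep y).

Lemma coset_lift_ltrans K d x :
  (forall k, K k -> H k) -> H d -> ltrans mul d (coset_lift K) x ->
  ltrans mul d K (mul x (inv (coset_rep x))).
Proof.
  intros HK Hd [y [[k [Kk Ey]] Ex]].
  assert (Erep : coset_rep x = coset_rep y) by (rewrite Ex; apply coset_rep_mul; exact Hd).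
  exists k. split; [exact Kk|].
  rewrite Erep, Ex, Ey at 1. rewrite <- !(mulgA HG), (mulgV HG), (mulg1 HG). reflexivity.
Qed.

Lemma weak_towers_of_subgroup n :
  weak_n_paradoxical_towers_in H n -> weak_n_paradoxical_towers mul n.
Proof.
  intros Htow m.
  destruct (Htow m) as (D & K & g & HnD & Hlen & HD & HK & Hdisj & Hcov).
  exists D, (fun j => coset_lift (K j)), g.
  split; [exact HnD|]. split; [exact Hlen|]. split.
  - intros j Hj d d' Hd Hd' Hne x Hx Hx'.
    apply (Hdisj j Hj d d' Hd Hd' Hne (mul x (inv (coset_rep x))));
      apply coset_lift_ltrans; auto; apply HK.
  - intro x. destruct (coset_rep_spec x) as [h [Hh Ex]].
    destruct (Hcov h Hh) as [j [Hj [k [Kk Eh]]]].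
    exists j. split; [exact Hj|]. exists (mul k (coset_rep x)). split.
    + exists k. split; [exact Kk|].
      rewrite coset_rep_mul, coset_rep_idem; [reflexivity | exact (HK j k Kk)].
    + rewrite Ex at 1. rewrite Eh, (mulgA HG). reflexivity.
Qed.

End SubgroupTowers.

Arguments weak_n_paradoxical_towers_in {G} mul H n.

Definition cancels (l l' : letter) : Prop := fst l = fst l' /\ snd l <> snd l'.

Definition letter_inv (l : letter) : letter := (fst l, negb (snd l)).

Definition word_inv (w : list letter) : list letter := rev (map letter_inv w).

Lemma cancelsE l l' : cancels l l' <-> l' = letter_inv l.
Proof.
  destruct l as [x e], l' as [x' e']; unfold cancels, letter_inv; simpl.
  split.
  - intros [-> Ne]. f_equal. destruct e, e'; simpl; congruence.
  - intro E. injection E as -> ->. split; [reflexivity | destruct e; discriminate].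
Qed.

Definition letter_eq_dec (l l' : letter) : {l = l'} + {l <> l'}.
Proof. decide equality; apply Bool.bool_dec. Defined.

Lemma reduced_cons l w : reduced (l :: w) -> reduced w.
Proof. destruct w; simpl; tauto. Qed.

Lemma reduced_cons_cons l l' w :
  ~ cancels l l' -> reduced (l' :: w) -> reduced (l :: l' :: w).
Proof. simpl; tauto. Qed.

Lemma reduced_cat w1 x w2 :
  reduced (w1 ++ [x]) -> reduced (x :: w2) -> reduced (w1 ++ x :: w2).
Proof.
  induction w1 as [|l [|l' w1] IH]; simpl; auto.
  - tauto.
  - intros [Hl Hw1] Hw2. split; [exact Hl | apply IH; assumption].
Qed.

Lemma reduced_rcons w l l' :
  reduced (w ++ [l]) -> ~ cancels l l' -> reduced (w ++ [l; l']).
Proof.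
  intros Hw Hl. apply reduced_cat; [exact Hw|]. simpl. tauto.
Qed.

Lemma reduced_word_inv w : reduced w -> reduced (word_inv w).
Proof.
  induction w as [|l [|l' w] IH]; intro Hw; unfold word_inv in *; simpl in *; auto.
  rewrite <- app_assoc. apply reduced_rcons; [tauto|].
  destruct Hw as [Hl _]. unfold cancels, letter_inv; simpl.
  intros [E1 E2]. apply Hl. split; [congruence|]. intro E. apply E2. congruence.
Qed.

Lemma reduced_repeat_cat l k w :
  reduced w -> (forall x, hd_error w = Some x -> ~ cancels l x) ->
  reduced (repeat l k ++ w).
Proof.
  intros Hw Hhd. induction k as [|k IH]; simpl; [exact Hw|].
  destruct k as [|k]; simpl in *.
  - destruct w as [|x w]; [exact I|]. apply reduced_cons_cons; auto.
  - split; [unfold cancels; tauto | exact IH].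
Qed.

Definition cons_reduce (l : letter) (w : list letter) : list letter :=
  match w with
  | l' :: w' => if letter_eq_dec l' (letter_inv l) then w' else l :: w
  | [] => [l]
  end.

Fixpoint reduce (w : list letter) : list letter :=
  match w with
  | [] => []
  | l :: w' => cons_reduce l (reduce w')
  end.

Lemma reduced_reduce w : reduced (reduce w).
Proof.
  induction w as [|l w IH]; simpl; [exact I|].
  destruct (reduce w) as [|l' w'] eqn:E; simpl; [exact I|].
  destruct (letter_eq_dec l' (letter_inv l)) as [_|Ne].
  - exact (reduced_cons _ _ IH).
  - apply reduced_cons_cons; [now rewrite cancelsE | exact IH].
Qed.

Lemma reduced_cancel_or_cons c w :
  reduced w -> (exists w', w = letter_inv c :: w') \/ reduced (c :: w).
Proof.
  intro Hw. destruct w as [|l w]; [right; exact I|].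
  destruct (letter_eq_dec l (letter_inv c)) as [->|Ne]; [left; eexists; reflexivity|].
  right. apply reduced_cons_cons; [now rewrite cancelsE | exact Hw].
Qed.

Lemma nat_neq_add_succ i j : i <> j -> exists k, j = i + S k \/ i = j + S k.
Proof.
  intro Ne. assert (L : i < j \/ j < i) by lia.
  destruct L; [exists (j - i - 1); left | exists (i - j - 1); right]; lia.
Qed.

Section FreePair.
Variables (G : Type) (mul : G -> G -> G) (one : G) (inv : G -> G).
Hypothesis HG : is_group mul one inv.
Variables a b : G.
Hypothesis Hfree : free_pair mul one inv a b.

Notation ev := (eval_word mul one inv a b).
Notation evl := (eval_letter inv a b).

Lemma eval_word_cat u v : ev (u ++ v) = mul (ev u) (ev v).
Proof.
  induction u as [|l u IH]; simpl.
  - rewrite (mul1g HG). reflexivity.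
  - rewrite IH, (mulgA HG). reflexivity.
Qed.

Lemma eval_letter_inv l : evl (letter_inv l) = inv (evl l).
Proof.
  destruct l as [x [|]]; unfold eval_letter, letter_inv; simpl;
    [rewrite (invgK HG) | ]; reflexivity.
Qed.

Lemma eval_word_inv w : ev (word_inv w) = inv (ev w).
Proof.
  induction w as [|l w IH]; unfold word_inv in *; simpl.
  - rewrite (invg1 HG). reflexivity.
  - rewrite eval_word_cat, IH, (invMg HG). simpl.
    rewrite (mulg1 HG), eval_letter_inv. reflexivity.
Qed.

Lemma eval_cons_reduce l w : ev (cons_reduce l w) = mul (evl l) (ev w).
Proof.
  destruct w as [|l' w]; simpl; [reflexivity|].
  destruct (letter_eq_dec l' (letter_inv l)) as [->|_]; [|reflexivity].
  rewrite eval_letter_inv, (mulgA HG), (mulgV HG), (mul1g HG). reflexivity.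
Qed.

Lemma eval_reduce w : ev (reduce w) = ev w.
Proof.
  induction w as [|l w IH]; simpl; [reflexivity|].
  rewrite eval_cons_reduce, IH. reflexivity.
Qed.

Lemma eval_repeat_neq_one l k : ev (repeat l (S k)) <> one.
Proof.
  apply Hfree; [discriminate|].
  rewrite <- app_nil_r. apply reduced_repeat_cat; [exact I | discriminate].
Qed.

(* The word (c r)^-1 l^(k+1) (c r') is reduced, since l and c involve
   different generators; freeness then forbids it to evaluate to one. *)
Lemma eval_neq_power_translate l c r r' k :
  fst l <> fst c -> reduced (c :: r) -> reduced (c :: r') ->
  ev (c :: r) <> mul (ev (repeat l (S k))) (ev (c :: r')).
Proof.
  intros Hlc Hr Hr' E.
  assert (Hsep : forall l1 l2, fst l1 <> fst l2 -> ~ cancels l1 l2)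
    by (intros l1 l2 Ne [Eq _]; exact (Ne Eq)).
  apply (Hfree (word_inv (c :: r) ++ repeat l (S k) ++ c :: r')).
  - intro Enil. apply app_eq_nil in Enil as [_ Enil]. discriminate.
  - change (word_inv (c :: r)) with (word_inv r ++ [letter_inv c]).
    rewrite <- app_assoc. apply reduced_cat.
    + exact (reduced_word_inv (c :: r) Hr).
    + apply reduced_cons_cons; [apply Hsep; simpl; congruence|].
      apply (reduced_repeat_cat l (S k) (c :: r')); [exact Hr'|].
      intros x Ex. injection Ex as <-. apply Hsep; exact Hlc.
  - rewrite !eval_word_cat, eval_word_inv, <- E, (mulVg HG). reflexivity.
Qed.

Definition bpow (i : nat) : G := ev (repeat (true, false) i).

Lemma bpow_add i k : bpow (i + k) = mul (bpow i) (bpow k).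
Proof. unfold bpow. rewrite repeat_app, eval_word_cat. reflexivity. Qed.

Lemma bpow_inj i j : bpow i = bpow j -> i = j.
Proof.
  intro E. destruct (Nat.eq_dec i j) as [|Ne]; [assumption|exfalso].
  destruct (nat_neq_add_succ i j Ne) as [k [-> | ->]]; rewrite bpow_add in E.
  - rewrite <- (mulg1 HG (bpow i)) in E at 1. apply (mulgI HG) in E.
    exact (eval_repeat_neq_one (true, false) k (eq_sym E)).
  - rewrite <- (mulg1 HG (bpow j)) in E at 2. apply (mulgI HG) in E.
    exact (eval_repeat_neq_one (true, false) k E).
Qed.

Definition generated_ab (x : G) : Prop := exists u, x = ev u.

Lemma generated_ab_one : generated_ab one.
Proof. exists []. reflexivity. Qed.

Lemma generated_ab_mul x y : generated_ab x -> generated_ab y -> generated_ab (mul x y).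
Proof. intros [u ->] [v ->]. exists (u ++ v). symmetry. apply eval_word_cat. Qed.

Lemma generated_ab_inv x : generated_ab x -> generated_ab (inv x).
Proof. intros [u ->]. exists (word_inv u). symmetry. apply eval_word_inv. Qed.

Definition starts_with (c : letter) (x : G) : Prop :=
  exists r, reduced (c :: r) /\ x = ev (c :: r).

Lemma bpow_translates_disjoint c i i' x :
  fst c = false -> i <> i' ->
  ltrans mul (bpow i) (starts_with c) x -> ltrans mul (bpow i') (starts_with c) x -> False.
Proof.
  intros Hc Ne.
  assert (Hlt : forall i k, ltrans mul (bpow i) (starts_with c) x ->
                            ltrans mul (bpow (i + S k)) (starts_with c) x -> False).
  { intros i0 k [y [[r [Hr ->]] Ex]] [y' [[r' [Hr' ->]] Ex']].
    rewrite Ex, bpow_add, <- (mulgA HG) in Ex'. apply (mulgI HG) in Ex'.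
    apply (eval_neq_power_translate (true, false) c r r' k); auto.
    rewrite Hc. discriminate. }
  destruct (nat_neq_add_succ i i' Ne) as [k [-> | ->]]; eauto.
Qed.

Lemma generated_ab_cover x :
  generated_ab x ->
  ltrans mul one (starts_with (false, false)) x \/ ltrans mul a (starts_with (false, true)) x.
Proof.
  intros [u ->]. rewrite <- eval_reduce.
  destruct (reduced_cancel_or_cons (false, true) (reduce u) (reduced_reduce u))
    as [[w E] | Hr].
  - left. exists (ev (reduce u)). split; [| symmetry; apply (mul1g HG)].
    pose proof (reduced_reduce u) as Hr. rewrite E in Hr |- *. exists w. auto.
  - right. exists (ev ((false, true) :: reduce u)). split; [exists (reduce u); auto|].
    simpl. unfold eval_letter; simpl. rewrite (mulgA HG), (mulgV HG), (mul1g HG).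
    reflexivity.
Qed.

Lemma free_pair_towers_in : weak_n_paradoxical_towers_in mul generated_ab 2.
Proof.
  intro m.
  exists (map bpow (seq 0 m)), (fun j => starts_with (false, negb (j =? 0))),
    (fun j => if j =? 0 then one else a).
  split; [|split; [|split; [|split; [|split]]]].
  - apply NoDup_map_NoDup_ForallPairs; [|apply seq_NoDup].
    intros i j _ _. apply bpow_inj.
  - rewrite length_map, length_seq. reflexivity.
  - intros d Hd. apply in_map_iff in Hd as [i [<- _]]. eexists. reflexivity.
  - intros j k [r [_ ->]]. eexists. reflexivity.
  - intros j _ d d' Hd Hd' Hne x.
    apply in_map_iff in Hd as [i [<- _]]. apply in_map_iff in Hd' as [i' [<- _]].
    apply bpow_translates_disjoint; [reflexivity|]. intros ->. exact (Hne eq_refl).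
  - intros x Hx. destruct (generated_ab_cover x Hx); [exists 0 | exists 1]; auto.
Qed.

End FreePair.

Theorem corollary3p13 (G : Type) (mul : G -> G -> G) (one : G) (inv : G -> G)
  (HG : is_group mul one inv) :
  contains_F2 mul one inv -> weak_paradoxical_towers mul.
Proof.
  intros [a [b Hfree]]. exists 2.
  apply (weak_towers_of_subgroup G mul one inv HG (generated_ab G mul one inv a b)).
  - apply generated_ab_one.
  - apply generated_ab_mul; exact HG.
  - apply generated_ab_inv; exact HG.
  - exact (free_pair_towers_in G mul one inv HG a b Hfree).
Qed.
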